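(* Let $X$ be a topological space and assume that for each sequence $(\mathcal{U}_n:n\in\mathbb{N})$ of $\omega$-covers of $X$ there are a positive integer $k$ and a sequence $(\mathcal{F}_n:n\in\mathbb{N})$ such that for each $n$, $\mathcal{F}_n\subseteq\mathcal{U}_n$ and $|\mathcal{F}_n|\le k$, and $\bigcup\{\mathcal{F}_n:n\in\mathbb{N}\}$ is an $\omega$-cover of $X$. Then $\textsf{S}_1(\Omega,\Omega)$ holds.
   Context: $\Omega$: the set of $\omega$-covers of $X$, i.e. open covers $\mathcal{U}$ with $X\notin\mathcal{U}$ such that every finite subset of $X$ lies in some member. $\textsf{S}_1(\Omega,\Omega)$: for every sequence $(\mathcal{U}_n)$ of $\omega$-covers there are $U_n\in\mathcal{U}_n$ such that $\{U_n:n\in\mathbb{N}\}$ is an $\omega$-cover. *)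

From mathcomp Require Import all_boot all_order.
From mathcomp Require Import all_classical topology.
Set Implicit Arguments. Unset Strict Implicit. Unset Printing Implicit Defensive.
Local Open Scope classical_set_scope.

Definition omega_cover (T : topologicalType) (U : set (set T)) : Prop :=
  (forall V, U V -> open V) /\
  ~ U setT /\
  (forall F : set T, finite_set F -> exists2 V, U V & F `<=` V).

Definition at_most_card (T : Type) (A : set (set T)) (k : nat) : Prop :=
  exists s : seq (set T), (size s <= k)%N /\ A = [set nth set0 s i | i in [set i : nat | (i < size s)%N]].

Definition S1_Omega_Omega (T : topologicalType) : Prop :=
  forall U : nat -> set (set T), (forall n, omega_cover (U n)) ->
  exists V : nat -> set T, (forall n, U n (V n)) /\ omega_cover (range V).

From mathcomp Require Import all_boot all_order.
From mathcomp Require Import all_classical topology.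
Set Implicit Arguments. Unset Strict Implicit. Unset Printing Implicit Defensive.
Local Open Scope classical_set_scope.

(* Index the covers by pairs (n, j) through an injection of nat * nat into
   nat.  For each n, the covers with indices (n, 0), ..., (n, n) are merged
   into the omega-cover W_n of their (n+1)-fold intersections.  The hypothesis
   yields families F_n of W_n of size at most k whose union is an omega-cover;
   from the j-th member of F_n we select its j-th factor, in the cover with
   index (n, j).  Removing the finitely many members of F_0, ..., F_(k-1) still
   leaves an omega-cover, so every finite set lies in the j-th member of some
   F_n with j < k <= n, hence in the selected factor. *)

Lemma open_bigcap_finite (T : topologicalType) (I : choiceType) (D : set I)
    (f : I -> set T) :
  finite_set D -> (forall i, D i -> open (f i)) -> open (\bigcap_(i in D) f i).
Proof.
move=> Dfin fo; rewrite -closedC setC_bigcap.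
by apply: closed_bigcup => // i Di; rewrite closedC; exact: fo.
Qed.

Section OmegaCovers.
Variable T : topologicalType.
Implicit Types (U A : set (set T)) (F : set T).

Lemma omega_cover_neq0 U : omega_cover U -> U !=set0.
Proof. by case=> _ [_ Ufin]; have [V UV _] := Ufin set0 (finite_set0 _); exists V. Qed.

Lemma omega_coverD U A : omega_cover U -> finite_set A -> omega_cover (U `\` A).
Proof.
move=> Uc Afin; have [Uo [UnT Ufin]] := Uc.
split; [by move=> V [] /Uo|split; first by case]; move=> F Ffin.
have [x0 _] : exists x0 : T, True.
  have [V UV] := omega_cover_neq0 Uc.
  have /setTPn[x _] : V != setT by apply/eqP => VT; apply: UnT; rewrite -VT.
  by exists x.
have [pt ptP] : {pt : set T -> T & forall V, U V -> ~ V (pt V)}.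
  apply: (@choice _ _ (fun (V : set T) x => U V -> ~ V x)) => V.
  have [/setTPn[x nVx]|/negP/negPn/eqP ->] := pselect (V != setT); first by exists x.
  by exists x0 => /UnT.
have Gfin : finite_set (F `|` pt @` (A `&` U)).
  by rewrite finite_setU; split => //; apply/finite_image/finite_setIl.
have [V UV FV] := Ufin _ Gfin; exists V; last by move=> x Fx; apply: FV; left.
split=> // AV; apply: (ptP V UV); apply: FV; right; exact: imageP.
Qed.

Lemma omega_cover_range (U : nat -> set (set T)) (V : nat -> set T) :
  (forall i, omega_cover (U i)) -> (forall i, U i (V i)) ->
  (forall F, finite_set F -> exists i, F `<=` V i) -> omega_cover (range V).
Proof.
move=> Uo UV Vfin; split; first by move=> _ [i _ <-]; case: (Uo i) => + _; exact.
split; first by move=> [i _ ViT]; case: (Uo i) => _ [+ _]; rewrite -ViT.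
by move=> F /Vfin[i FV]; exists (V i).
Qed.

Definition meet_family (U : nat -> set (set T)) (n : nat) : set (set T) :=
  [set \bigcap_(l in `I_n.+1) f l | f in [set f | forall l, `I_n.+1 l -> U l (f l)]].

Lemma meet_family_sub (U : nat -> set (set T)) n G l :
  meet_family U n G -> `I_n.+1 l -> exists2 V, U l V & G `<=` V.
Proof. by move=> [f fU <-] ln; exists (f l); [exact: fU|exact: bigcap_inf]. Qed.

Lemma omega_cover_meet_family (U : nat -> set (set T)) n :
  (forall l, `I_n.+1 l -> omega_cover (U l)) -> omega_cover (meet_family U n).
Proof.
move=> Uo; split; [|split].
- move=> _ [f fU <-]; apply: open_bigcap_finite => [|l ln]; first exact: finite_II.
  by case: (Uo l ln) => + _; apply; exact: fU.
- move=> [f fU fT]; have I0 : `I_n.+1 0%N by [].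
  case: (Uo 0%N I0) => _ [+ _]; apply; suff <- : f 0%N = setT by exact: fU.
  by apply/seteqP; split=> // x _; apply: (bigcap_inf (F := f) I0); rewrite fT.
- move=> F Ffin.
  have [f fP] : {f : nat -> set T & forall l, `I_n.+1 l -> U l (f l) /\ F `<=` f l}.
    apply: (@choice _ _ (fun l V => `I_n.+1 l -> U l V /\ F `<=` V)) => l.
    have [ln|nln] := pselect (`I_n.+1 l); last by exists set0.
    by case: (Uo l ln) => _ [_ /(_ F Ffin)[V UV FV]]; exists V.
  exists (\bigcap_(l in `I_n.+1) f l); first by exists f => // l /fP[].
  by apply: sub_bigcap => l /fP[].
Qed.

Lemma at_most_card_finite (A : set (set T)) k : at_most_card A k -> finite_set A.
Proof. by move=> [s [_ ->]]; apply: finite_image; exact: finite_II. Qed.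

End OmegaCovers.

Lemma pickle_selection (X : Type) (I : countType) (U : nat -> set (set X))
    (Q : I -> set X -> Prop) :
  (forall i, U i !=set0) -> (forall p, exists2 V, U (pickle p) V & Q p V) ->
  exists V : nat -> set X, (forall i, U i (V i)) /\ forall p, Q p (V (pickle p)).
Proof.
move=> Un0 UQ.
have [d dU] := choice Un0.
have [h hP] : {h : I -> set X & forall p, U (pickle p) (h p) /\ Q p (h p)}.
  apply: (@choice _ _ (fun p V => U (pickle p) V /\ Q p V)) => p.
  by have [V UV QV] := UQ p; exists V.
exists (fun i => if pickle_inv i is Some p then h p else d i); split.
  move=> i; have := @pickle_invK I i.
  by case: (pickle_inv i) => [p /= <-|_]; [case: (hP p)|exact: dU].
by move=> p; rewrite pickleK_inv; case: (hP p).
Qed.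

Theorem corollary3p4 (T : topologicalType) :
  (forall U : nat -> set (set T), (forall n, omega_cover (U n)) ->
     exists (k : nat) (F : nat -> set (set T)),
       (0 < k)%N /\
       (forall n, F n `<=` U n /\ at_most_card (F n) k) /\
       omega_cover (\bigcup_n F n)) ->
  S1_Omega_Omega T.
Proof.
move=> hyp U Uo.
pose W n := meet_family (fun l => U (pickle (n, l))) n.
have [k [F [_ [FW Fo]]]] := hyp W (fun n => omega_cover_meet_family (fun l _ => Uo _)).
have [s Fs] := choice (fun n => (FW n).2).
pose Q (p : nat * nat) V := `I_p.1.+1 p.2 -> W p.1 (nth set0 (s p.1) p.2) ->
  nth set0 (s p.1) p.2 `<=` V.
have [V [UV QV]] : exists V, (forall i, U i (V i)) /\ forall p, Q p (V (pickle p)).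
  apply: pickle_selection => [i|[n j]]; first exact: omega_cover_neq0.
  have [[jn /meet_family_sub/(_ jn)[G UG]]|njW] :=
    pselect (`I_n.+1 j /\ W n (nth set0 (s n) j)); first by exists G.
  have [G UG] := omega_cover_neq0 (Uo (pickle (n, j))).
  by exists G => // jn WG; case: njW.
exists V; split=> //; apply: omega_cover_range => // A Afin.
have Fsmall : finite_set (\bigcup_(n in `I_k) F n).
  apply: bigcup_finite => [|n _]; first exact: finite_II.
  exact: at_most_card_finite (FW n).2.
have [_ [_ /(_ A Afin)[G [[n _ FnG] Gbig] AG]]] := omega_coverD Fo Fsmall.
have kn : (k <= n)%N by rewrite leqNgt; apply/negP => nk; apply: Gbig; exists n.
have WG := (FW n).1 _ FnG; move: FnG; rewrite (Fs n).2 => -[j js jG].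
have jn : `I_n.+1 j by rewrite /= ltnS (leq_trans (ltnW js)) // (leq_trans (Fs n).1).
exists (pickle (n, j)); apply: subset_trans AG _; rewrite -jG.
by apply: (QV (n, j)) => //; rewrite jG.
Qed.
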